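(* Let $\Sigma$ be an alphabet and $(\mathcal{O},d)$ a pseudometric space. Then: (1) the mapping $T\mapsto V(T)$ extends to a functor $V:\mathbf{TS}_{\Sigma}\mathcal{O}\to\mathbf{Tr}_{\Sigma}\mathcal{O}$ which is a coreflection; (2) for every transition system with observations $X$, the morphism $\mathrm{unf}_X:V(X)\to X$ sending a run to its last state is a $0$-bounded $\mathbf{Lin}_{\Sigma}\mathcal{O}$-open morphism; (3) for every $\epsilon\ge0$, there is an $\epsilon$-approximate bisimulation between $T$ and $T'$ if and only if there is an $\epsilon$-approximate bisimulation between $V(T)$ and $V(T')$.
   Context: A transition system over $\Sigma$ is $(S,i,\Delta)$ with $i\in S$, $\Delta\subseteq S\times\Sigma\times S$; morphisms are functions on states preserving the initial state and transitions. A run of $(S,i,\Delta)$ is a sequence $i=q_0\xrightarrow{a_1}q_1\cdots\xrightarrow{a_n}q_n$ with $(q_{j-1},a_j,q_j)\in\Delta$. A synchronization tree is a transition system in which every state is the end of exactly one run (from the initial state). A transition system with observations is $(S,i,\Delta,\omega)$ with $\omega:S\to\mathcal{O}$; an $\epsilon$-bounded morphism is a transition system morphism $f$ with $d(\omega(s),\omega'(f(s)))\le\epsilon$ for all $s$, and a bounded morphism is one that is $\epsilon$-bounded for some $\epsilon\ge0$; these form the category $\mathbf{TS}_{\Sigma}\mathcal{O}$. $\mathbf{Tr}_{\Sigma}\mathcal{O}$ is its full subcategory of systems whose underlying transition system is a synchronization tree, and $\mathbf{Lin}_{\Sigma}\mathcal{O}$ its full subcategory of systems whose underlying transition system is a finite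 linear system $L(a_1\cdots a_n)$ (states $0,\dots,n$, initial $0$, transitions $(j-1,a_j,j)$). For $T=(S,i,\Delta,\omega)$, $V(T)$ has as states the runs of $T$, initial state the one-element run $i$, transitions $(\pi,a,\pi\xrightarrow{a}q)$ for each run $\pi$ ending in $q_n$ and each $(q_n,a,q)\in\Delta$, and observation $\omega(q_0\xrightarrow{a_1}\cdots\xrightarrow{a_n}q_n)=\omega(q_n)$. A functor is a coreflection if it is a right adjoint whose left adjoint is fully faithful (equivalently, a right adjoint whose adjunction unit is an isomorphism). A morphism $f:X\to Y$ is $\mathcal{P}$-open if for every $e:P\to P'$ in $\mathcal{P}$ and $p:P\to X$, $q':P'\to Y$ with $f\circ p=q'\circ e$ there is $q:P'\to X$ with $q\circ e=p$, $f\circ q=q'$. An $\epsilon$-approximate bisimulation between $(S,i,\Delta,\omega)$ and $(S',i',\Delta',\omega')$ is a strong bisimulation $R$ between the underlying transition systems (containing $(i,i')$ and satisfying the usual back-and-forth transfer conditions) with $d(\omega(s),\omega'(s'))\le\epsilon$ for all $(s,s')\in R$. *)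

From Stdlib Require Import Reals List.
Import ListNotations.
Open Scope R_scope.

Definition is_pseudometric {O : Type} (d : O -> O -> R) : Prop :=
  (forall x, d x x = 0) /\ (forall x y, d x y = d y x) /\
  (forall x y z, d x z <= d x y + d y z).

Record TSO (Sig O : Type) : Type := mkTSO {
  st : Type;
  init : st;
  trans : st -> Sig -> st -> Prop;
  obs : st -> O }.
Arguments st {Sig O} _.
Arguments init {Sig O} _.
Arguments trans {Sig O} _ _ _ _.
Arguments obs {Sig O} _ _.
Arguments mkTSO {Sig O} _ _ _ _.

Section TS.
Context {Sig O : Type} (d : O -> O -> R).

Definition is_tsmor (X Y : TSO Sig O) (f : st X -> st Y) : Prop :=
  f (init X) = init Y /\
  (forall s a s', trans X s a s' -> trans Y (f s) a (f s')).

Definition is_eps_mor (eps : R) (X Y : TSO Sig O) (f : st X -> st Y) : Prop :=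
  is_tsmor X Y f /\ forall s, d (obs X s) (obs Y (f s)) <= eps.

Definition is_bmor (X Y : TSO Sig O) (f : st X -> st Y) : Prop :=
  exists eps, 0 <= eps /\ is_eps_mor eps X Y f.

Definition Hom (X Y : TSO Sig O) : Type := { f : st X -> st Y | is_bmor X Y f }.

(* Runs. A run  q0 -a1-> q1 ... -an-> qn  from q0 is encoded by the list
   [(a1,q1); ...; (an,qn)]. *)
Fixpoint valid (X : TSO Sig O) (q : st X) (l : list (Sig * st X)) : Prop :=
  match l with
  | [] => True
  | (a, q') :: l' => trans X q a q' /\ valid X q' l'
  end.

Fixpoint last_st (X : TSO Sig O) (q : st X) (l : list (Sig * st X)) : st X :=
  match l with
  | [] => q
  | (_, q') :: l' => last_st X q' l'
  end.

Definition run_to (X : TSO Sig O) (s : st X) (l : list (Sig * st X)) : Prop :=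
  valid X (init X) l /\ last_st X (init X) l = s.

Definition is_tree (X : TSO Sig O) : Prop :=
  forall s, exists l, run_to X s l /\ forall l', run_to X s l' -> l' = l.

Definition Run (X : TSO Sig O) : Type :=
  { l : list (Sig * st X) | valid X (init X) l }.

Definition run_nil (X : TSO Sig O) : Run X := exist _ [] I.

Definition unf (X : TSO Sig O) (r : Run X) : st X :=
  last_st X (init X) (proj1_sig r).

Definition V (X : TSO Sig O) : TSO Sig O :=
  mkTSO (Run X) (run_nil X)
    (fun r a r' => exists q, trans X (unf X r) a q /\
                        proj1_sig r' = proj1_sig r ++ [(a, q)])
    (fun r => obs X (unf X r)).

Definition LinSt (w : list Sig) : Type := { j : nat | Nat.leb j (length w) = true }.

Definition Lin (w : list Sig) (om : LinSt w -> O) : TSO Sig O :=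
  mkTSO (LinSt w) (exist _ 0%nat eq_refl)
    (fun j a k => proj1_sig k = S (proj1_sig j) /\ nth_error w (proj1_sig j) = Some a)
    om.

(* Lin_Sig O - open morphisms (P-open with P the full subcategory of linear systems) *)
Definition is_Lin_open (X Y : TSO Sig O) (f : st X -> st Y) : Prop :=
  forall (w : list Sig) (om : LinSt w -> O) (w' : list Sig) (om' : LinSt w' -> O)
    (e : Hom (Lin w om) (Lin w' om')) (p : Hom (Lin w om) X) (q' : Hom (Lin w' om') Y),
    (forall s, f (proj1_sig p s) = proj1_sig q' (proj1_sig e s)) ->
    exists q : Hom (Lin w' om') X,
      (forall s, proj1_sig q (proj1_sig e s) = proj1_sig p s) /\
      (forall s, f (proj1_sig q s) = proj1_sig q' s).

Definition is_approx_bisim (eps : R) (X Y : TSO Sig O) (Rl : st X -> st Y -> Prop) : Prop :=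
  Rl (init X) (init Y) /\
  (forall s s' a t, Rl s s' -> trans X s a t -> exists t', trans Y s' a t' /\ Rl t t') /\
  (forall s s' a t', Rl s s' -> trans Y s' a t' -> exists t, trans X s a t /\ Rl t t') /\
  (forall s s', Rl s s' -> d (obs X s) (obs Y s') <= eps).

(* V extends to a functor TS -> Tr which is a coreflection, i.e. right adjoint
   to the (fully faithful) inclusion Tr -> TS, with counit unf and invertible unit. *)
Definition V_coreflection : Prop :=
  (forall X : TSO Sig O, is_tree (V X)) /\
  exists Vmor : forall X Y : TSO Sig O, Hom X Y -> Hom (V X) (V Y),
    (forall (X : TSO Sig O) (f : Hom X X), (forall s, proj1_sig f s = s) ->
       forall r, proj1_sig (Vmor X X f) r = r) /\
    (forall (X Y Z : TSO Sig O) (f : Hom X Y) (g : Hom Y Z) (h : Hom X Z),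
       (forall s, proj1_sig h s = proj1_sig g (proj1_sig f s)) ->
       forall r, proj1_sig (Vmor X Z h) r = proj1_sig (Vmor Y Z g) (proj1_sig (Vmor X Y f) r)) /\
    (forall X : TSO Sig O, is_bmor (V X) X (unf X)) /\
    (forall (X Y : TSO Sig O) (f : Hom X Y) r,
       unf Y (proj1_sig (Vmor X Y f) r) = proj1_sig f (unf X r)) /\
    (* universal property of the counit (adjunction Incl -| V) *)
    (forall (T X : TSO Sig O), is_tree T -> forall g : Hom T X,
       exists h : Hom T (V X),
         (forall t, unf X (proj1_sig h t) = proj1_sig g t) /\
         (forall h' : Hom T (V X), (forall t, unf X (proj1_sig h' t) = proj1_sig g t) ->
            forall t, proj1_sig h' t = proj1_sig h t)) /\
    (forall T : TSO Sig O, is_tree T ->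
       exists eta : Hom T (V T),
         (forall t, unf T (proj1_sig eta t) = t) /\
         (forall r, proj1_sig eta (unf T r) = r)).

End TS.

(* A morphism h from a system
   whose states are all reachable into V(X) is determined by unf o h: it must
   send the endpoint of a run to that run relabelled by unf o h.  Conversely,
   for a tree T every g : T -> X lifts to V(X) by relabelling the unique run to
   each state with g; this is the couniversal property of unf, and for
   g = id it inverts unf on trees.  Finite linear systems are trees, so
   Lin-openness is an instance: the lift of q' composed with e and p agree
   because both have the same composite with unf.  Approximate bisimulations
   lift to runs by relating runs stepwise, and descend by taking last states. *)
From Stdlib Require Import Reals List ProofIrrelevance ClassicalEpsilon Lia Lra.
Import ListNotations.
Open Scope R_scope.

Lemma sig_eq {A : Type} {P : A -> Prop} (x y : sig P) :
  proj1_sig x = proj1_sig y -> x = y.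
Proof. apply eq_sig_hprop; intros; apply proof_irrelevance. Qed.

Section Runs.
Context {Sig O : Type}.
Implicit Types X Y : TSO Sig O.

Lemma valid_app X q l1 l2 :
  valid X q (l1 ++ l2) <-> valid X q l1 /\ valid X (last_st X q l1) l2.
Proof.
  revert q; induction l1 as [|[a q'] l1 IH]; intro q; simpl; [tauto|].
  rewrite IH; tauto.
Qed.

Lemma last_st_app X q l1 l2 :
  last_st X q (l1 ++ l2) = last_st X (last_st X q l1) l2.
Proof. revert q; induction l1 as [|[a q'] l1 IH]; intro q; simpl; auto. Qed.

Lemma valid_snoc X q l a q' :
  valid X q (l ++ [(a, q')]) <-> valid X q l /\ trans X (last_st X q l) a q'.
Proof. rewrite valid_app; simpl; tauto. Qed.

Lemma last_st_snoc X q l a q' : last_st X q (l ++ [(a, q')]) = q'.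
Proof. rewrite last_st_app; reflexivity. Qed.

Definition reachable X : Prop := forall s, exists l, run_to X s l.

Lemma tree_reachable X : is_tree X -> reachable X.
Proof. intros Htree s; destruct (Htree s) as [l [Hl _]]; eauto. Qed.

Definition map_states {X Y} (f : st X -> st Y) (l : list (Sig * st X)) :
  list (Sig * st Y) :=
  map (fun p => (fst p, f (snd p))) l.

Lemma map_states_snoc {X Y} (f : st X -> st Y) l a q :
  map_states f (l ++ [(a, q)]) = map_states f l ++ [(a, f q)].
Proof. unfold map_states; rewrite map_app; reflexivity. Qed.

Lemma map_states_ext {X Y} (f g : st X -> st Y) l :
  (forall s, f s = g s) -> map_states f l = map_states g l.
Proof. intro Hfg; apply map_ext; intros [a s]; simpl; rewrite Hfg; reflexivity. Qed.

Lemma map_states_id {X} (f : st X -> st X) l :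
  (forall s, f s = s) -> map_states f l = l.
Proof.
  intro Hf; induction l as [|[a s] l IH]; simpl; [reflexivity|].
  rewrite Hf; f_equal; exact IH.
Qed.

Lemma map_states_comp {X Y Z : TSO Sig O} (f : st X -> st Y) (g : st Y -> st Z) l :
  map_states g (map_states f l) = map_states (fun s => g (f s)) l.
Proof. unfold map_states; rewrite map_map; reflexivity. Qed.

Lemma last_st_map_states {X Y} (f : st X -> st Y) q l :
  last_st Y (f q) (map_states f l) = f (last_st X q l).
Proof. revert q; induction l as [|[a q'] l IH]; intro q; simpl; auto. Qed.

Lemma valid_map_states {X Y} (f : st X -> st Y) :
  (forall s a s', trans X s a s' -> trans Y (f s) a (f s')) ->
  forall q l, valid X q l -> valid Y (f q) (map_states f l).
Proof.
  intros Hf q l; revert q; induction l as [|[a q'] l IH]; intro q; simpl; auto.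
  intros [Hq Hl]; auto.
Qed.

Lemma tsmor_map_run {X Y} (f : st X -> st Y) l :
  is_tsmor X Y f -> valid X (init X) l ->
  valid Y (init Y) (map_states f l) /\
  last_st Y (init Y) (map_states f l) = f (last_st X (init X) l).
Proof.
  intros [Hinit Htrans] Hl; rewrite <- Hinit; split.
  - exact (valid_map_states f Htrans _ _ Hl).
  - apply last_st_map_states.
Qed.

Lemma tsmor_comp {X Y Z : TSO Sig O} (f : st X -> st Y) (g : st Y -> st Z) :
  is_tsmor X Y f -> is_tsmor Y Z g -> is_tsmor X Z (fun s => g (f s)).
Proof.
  intros [Hf0 Hf] [Hg0 Hg]; split; [congruence|auto].
Qed.

End Runs.

Section GradedTrees.
Context {Sig O : Type}.
Variables (X : TSO Sig O) (rank : st X -> nat).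
Hypothesis rank_init : rank (init X) = 0%nat.
Hypothesis rank_trans : forall s a t, trans X s a t -> rank t = S (rank s).
Hypothesis trans_source_unique :
  forall s s' a a' t, trans X s a t -> trans X s' a' t -> s = s' /\ a = a'.

Lemma rank_last_st s l : valid X s l -> rank (last_st X s l) = (rank s + length l)%nat.
Proof.
  revert s; induction l as [|[a q] l IH]; intros s; simpl; [lia|].
  intros [Hq Hl]; rewrite IH, (rank_trans _ _ _ Hq) by exact Hl; lia.
Qed.

Lemma run_length_unique l1 l2 :
  valid X (init X) l1 -> valid X (init X) l2 ->
  last_st X (init X) l1 = last_st X (init X) l2 -> length l1 = length l2.
Proof.
  intros H1 H2 Hlast; apply (f_equal rank) in Hlast.
  rewrite !rank_last_st, rank_init in Hlast by assumption; exact Hlast.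
Qed.

Lemma run_unique l1 l2 :
  valid X (init X) l1 -> valid X (init X) l2 ->
  last_st X (init X) l1 = last_st X (init X) l2 -> l1 = l2.
Proof.
  revert l2; induction l1 as [|[a q] l1 IH] using rev_ind;
    intros l2 H1 H2 Hlast;
    pose proof (run_length_unique _ _ H1 H2 Hlast) as Hlen;
    destruct l2 as [|[b q'] l2 _] using rev_ind; rewrite ?length_app in Hlen;
    simpl in Hlen; try reflexivity; try lia.
  rewrite !last_st_snoc in Hlast; subst q'.
  apply valid_snoc in H1 as [H1 Hq1], H2 as [H2 Hq2].
  destruct (trans_source_unique _ _ _ _ _ Hq1 Hq2) as [Hsrc <-].
  rewrite (IH l2 H1 H2 Hsrc); reflexivity.
Qed.

Lemma reachable_graded_tree : reachable X -> is_tree X.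
Proof.
  intros Hreach s; destruct (Hreach s) as [l [Hl Hlast]].
  exists l; split; [split; assumption|].
  intros l' [Hl' Hlast']; apply run_unique; congruence.
Qed.

End GradedTrees.

Section Unfolding.
Context {Sig O : Type}.
Implicit Types X T : TSO Sig O.

Lemma unf_tsmor X : is_tsmor (V X) X (unf X).
Proof.
  split; [reflexivity|].
  intros r a r' [q [Hq Hr']]; unfold unf at 2; rewrite Hr', last_st_snoc; exact Hq.
Qed.

Definition run_snoc {X} (r : Run X) (a : Sig) (q : st X) (Hq : trans X (unf X r) a q) :
  Run X :=
  exist _ (proj1_sig r ++ [(a, q)]) (proj2 (valid_snoc X _ _ a q) (conj (proj2_sig r) Hq)).

Lemma unf_run_snoc {X} (r : Run X) a q Hq : unf X (run_snoc r a q Hq) = q.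
Proof. apply last_st_snoc. Qed.

Lemma trans_run_snoc {X} (r : Run X) a q Hq : trans (V X) r a (run_snoc r a q Hq).
Proof. exists q; split; [exact Hq|reflexivity]. Qed.

Lemma V_reachable X : reachable (V X).
Proof.
  intros [l Hl]; revert Hl.
  induction l as [|[a q] l IH] using rev_ind; intros Hl.
  - exists []; split; [exact I|apply sig_eq; reflexivity].
  - pose proof Hl as Hsnoc; apply valid_snoc in Hsnoc as [Hl0 Hq].
    destruct (IH Hl0) as [L [HL Hlast]].
    exists (L ++ [(a, exist _ _ Hl)]); split.
    + apply valid_snoc; split; [exact HL|].
      rewrite Hlast; exists q; split; [exact Hq|reflexivity].
    + apply last_st_snoc.
Qed.

Lemma V_is_tree X : is_tree (V X).
Proof.
  apply (reachable_graded_tree (V X) (fun r : Run X => length (proj1_sig r))); [reflexivity| | |].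
  - intros r a r' [q [_ Hr']]; rewrite Hr', length_app; simpl; lia.
  - intros r r' a a' t [q [_ Ht]] [q' [_ Ht']]; rewrite Ht in Ht'.
    apply app_inj_tail in Ht' as [Hr Hlast]; injection Hlast as <- _.
    split; [apply sig_eq; exact Hr|reflexivity].
  - apply V_reachable.
Qed.

Lemma tsmor_into_V_run T X (h : st T -> Run X) l :
  is_tsmor T (V X) h -> valid T (init T) l ->
  proj1_sig (h (last_st T (init T) l)) = map_states (fun t => unf X (h t)) l.
Proof.
  intros [Hinit Htrans]; induction l as [|[a q] l IH] using rev_ind; intros Hl.
  - simpl; rewrite Hinit; reflexivity.
  - apply valid_snoc in Hl as [Hl Hq].
    destruct (Htrans _ _ _ Hq) as [q' [_ Hh]].
    rewrite last_st_snoc, Hh, IH, map_states_snoc by exact Hl.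
    apply (f_equal (last_st X (init X))) in Hh; rewrite last_st_snoc in Hh.
    unfold unf; rewrite Hh; reflexivity.
Qed.

Lemma tsmor_into_V_unique T X (h h' : st T -> Run X) :
  reachable T -> is_tsmor T (V X) h -> is_tsmor T (V X) h' ->
  (forall t, unf X (h t) = unf X (h' t)) -> forall t, h t = h' t.
Proof.
  intros Hreach Hh Hh' Hunf t; destruct (Hreach t) as [l [Hl <-]].
  apply sig_eq; rewrite !tsmor_into_V_run by assumption.
  apply map_states_ext; exact Hunf.
Qed.

End Unfolding.

Section Coreflection.
Context {Sig O : Type} (d : O -> O -> R).
Implicit Types X Y T : TSO Sig O.

Lemma Hom_tsmor {X Y} (f : Hom d X Y) : is_tsmor X Y (proj1_sig f).
Proof. destruct (proj2_sig f) as [eps [_ [Hf _]]]; exact Hf. Qed.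

Lemma id_bmor (Hd : is_pseudometric d) X : is_bmor d X X (fun s => s).
Proof.
  destruct Hd as [Hdxx _].
  exists 0; split; [lra|]; split; [split; auto|].
  intro s; rewrite Hdxx; lra.
Qed.

Lemma unf_zero_bounded (Hd : is_pseudometric d) X : is_eps_mor d 0 (V X) X (unf X).
Proof.
  destruct Hd as [Hdxx _].
  split; [apply unf_tsmor|]; intro r; simpl; rewrite Hdxx; lra.
Qed.

Definition V_fun {X Y} (f : Hom d X Y) (r : Run X) : Run Y :=
  exist _ (map_states (proj1_sig f) (proj1_sig r))
    (proj1 (tsmor_map_run _ _ (Hom_tsmor f) (proj2_sig r))).

Lemma unf_V_fun {X Y} (f : Hom d X Y) r : unf Y (V_fun f r) = proj1_sig f (unf X r).
Proof. exact (proj2 (tsmor_map_run _ _ (Hom_tsmor f) (proj2_sig r))). Qed.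

Lemma V_fun_bmor {X Y} (f : Hom d X Y) : is_bmor d (V X) (V Y) (V_fun f).
Proof.
  destruct (proj2_sig f) as [eps [Heps [[_ Htrans] Hobs]]].
  exists eps; split; [exact Heps|]; split; [split|].
  - apply sig_eq; reflexivity.
  - intros r a r' [q [Hq Hr']]; exists (proj1_sig f q); split.
    + rewrite unf_V_fun; auto.
    + simpl; rewrite Hr'; apply map_states_snoc.
  - intro r; simpl; rewrite unf_V_fun; apply Hobs.
Qed.

Definition V_hom {X Y} (f : Hom d X Y) : Hom d (V X) (V Y) := exist _ (V_fun f) (V_fun_bmor f).

Section TreeLift.
Variables (T X : TSO Sig O) (T_tree : is_tree T) (g : Hom d T X).

Definition tree_run (t : st T) : list (Sig * st T) :=
  proj1_sig (constructive_indefinite_description _ (T_tree t)).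

Lemma tree_run_spec t : run_to T t (tree_run t) /\ forall l, run_to T t l -> l = tree_run t.
Proof.
  unfold tree_run; destruct (constructive_indefinite_description _ (T_tree t)) as [l Hl].
  exact Hl.
Qed.

Lemma tree_run_trans s a t : trans T s a t -> tree_run t = tree_run s ++ [(a, t)].
Proof.
  intro Hst; symmetry; apply tree_run_spec.
  destruct (proj1 (tree_run_spec s)) as [Hs Hlast]; split.
  - apply valid_snoc; rewrite Hlast; auto.
  - apply last_st_snoc.
Qed.

Definition lift_fun (t : st T) : Run X :=
  exist _ (map_states (proj1_sig g) (tree_run t))
    (proj1 (tsmor_map_run _ _ (Hom_tsmor g) (proj1 (proj1 (tree_run_spec t))))).

Lemma unf_lift_fun t : unf X (lift_fun t) = proj1_sig g t.
Proof.
  destruct (tree_run_spec t) as [[Ht Hlast] _].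
  unfold unf; simpl; rewrite (proj2 (tsmor_map_run _ _ (Hom_tsmor g) Ht)), Hlast.
  reflexivity.
Qed.

Lemma lift_fun_bmor : is_bmor d T (V X) lift_fun.
Proof.
  destruct (proj2_sig g) as [eps [Heps [[_ Htrans] Hobs]]].
  exists eps; split; [exact Heps|]; split; [split|].
  - apply sig_eq; simpl.
    rewrite <- (proj2 (tree_run_spec (init T)) []); [reflexivity|].
    split; [exact I|reflexivity].
  - intros s a t Hst; exists (proj1_sig g t); split.
    + rewrite unf_lift_fun; auto.
    + simpl; rewrite (tree_run_trans _ _ _ Hst); apply map_states_snoc.
  - intro t; simpl; rewrite unf_lift_fun; apply Hobs.
Qed.

Definition lift : Hom d T (V X) := exist _ lift_fun lift_fun_bmor.

Lemma lift_unique (h : st T -> Run X) :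
  is_tsmor T (V X) h -> (forall t, unf X (h t) = proj1_sig g t) ->
  forall t, h t = lift_fun t.
Proof.
  intros Hh Hunf; apply tsmor_into_V_unique; auto using tree_reachable.
  - exact (Hom_tsmor lift).
  - intro t; rewrite unf_lift_fun; apply Hunf.
Qed.

End TreeLift.

Lemma lift_id_unf (Hd : is_pseudometric d) T (T_tree : is_tree T) (r : Run T) :
  lift_fun T T T_tree (exist _ _ (id_bmor Hd T)) (unf T r) = r.
Proof.
  apply sig_eq; simpl; rewrite map_states_id by reflexivity.
  symmetry; apply tree_run_spec; split; [exact (proj2_sig r)|reflexivity].
Qed.

Lemma V_is_coreflection (Hd : is_pseudometric d) : @V_coreflection Sig O d.
Proof.
  split; [exact V_is_tree|].
  exists (fun X Y f => V_hom f); split; [|split; [|split; [|split; [|split]]]].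
  - intros X f Hf r; apply sig_eq; apply map_states_id; exact Hf.
  - intros X Y Z f g h Hh r; apply sig_eq; simpl.
    rewrite map_states_comp; apply map_states_ext; exact Hh.
  - intro X; exists 0; split; [lra|apply unf_zero_bounded, Hd].
  - intros X Y f r; apply unf_V_fun.
  - intros T X T_tree g; exists (lift T X T_tree g); split.
    + apply unf_lift_fun.
    + intros h' Hh'; apply lift_unique; [apply Hom_tsmor|exact Hh'].
  - intros T T_tree; exists (lift T T T_tree (exist _ _ (id_bmor Hd T))); split.
    + apply unf_lift_fun.
    + apply lift_id_unf.
Qed.

Lemma unf_open_for_trees T T' X (T_reach : reachable T) (T'_tree : is_tree T')
  (e : st T -> st T') (p : st T -> Run X) (q' : Hom d T' X) :
  is_tsmor T T' e -> is_tsmor T (V X) p ->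
  (forall s, unf X (p s) = proj1_sig q' (e s)) ->
  exists q : Hom d T' (V X),
    (forall s, proj1_sig q (e s) = p s) /\ (forall s, unf X (proj1_sig q s) = proj1_sig q' s).
Proof.
  intros He Hp Hsquare.
  exists (lift T' X T'_tree q'); split; [|apply unf_lift_fun].
  apply tsmor_into_V_unique; [exact T_reach| |exact Hp|].
  - exact (tsmor_comp e _ He (Hom_tsmor (lift T' X T'_tree q'))).
  - intro s; simpl; rewrite unf_lift_fun; symmetry; apply Hsquare.
Qed.

End Coreflection.

Section LinearSystems.
Context {Sig O : Type} (d : O -> O -> R).

Lemma Lin_reachable (w : list Sig) (om : LinSt w -> O) : reachable (Lin w om).
Proof.
  intros [j Hj]; revert Hj; induction j as [|j IH]; intros Hj.
  - exists []; split; [exact I|apply sig_eq; reflexivity].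
  - pose proof (proj1 (Nat.leb_le _ _) Hj) as Hjw.
    assert (Hj' : Nat.leb j (length w) = true) by (apply Nat.leb_le; lia).
    destruct (nth_error w j) as [a|] eqn:Ha.
    2: { apply nth_error_None in Ha; lia. }
    destruct (IH Hj') as [l [Hl Hlast]].
    exists (l ++ [(a, exist _ (S j) Hj)]); split.
    + apply valid_snoc; split; [exact Hl|]; rewrite Hlast; split; [reflexivity|exact Ha].
    + apply last_st_snoc.
Qed.

Lemma Lin_is_tree (w : list Sig) (om : LinSt w -> O) : is_tree (Lin w om).
Proof.
  apply (reachable_graded_tree (Lin w om) (fun j : LinSt w => proj1_sig j));
    [reflexivity| | |apply Lin_reachable].
  - intros j a k [Hk _]; exact Hk.
  - intros j j' a a' k [Hk Ha] [Hk' Ha']; rewrite Hk in Hk'; injection Hk' as Hjj'.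
    rewrite Hjj', Ha' in Ha; injection Ha as ->.
    split; [apply sig_eq; exact Hjj'|reflexivity].
Qed.

Lemma unf_Lin_open (X : TSO Sig O) : is_Lin_open d (V X) X (unf X).
Proof.
  intros w om w' om' e p q' Hsquare.
  apply (unf_open_for_trees d _ _ _ (Lin_reachable w om) (Lin_is_tree w' om'));
    [apply Hom_tsmor|apply Hom_tsmor|exact Hsquare].
Qed.

End LinearSystems.

Section Bisimulations.
Context {Sig O : Type} (d : O -> O -> R) (eps : R) (T T' : TSO Sig O).

Definition runs_related (Rl : st T -> st T' -> Prop) (r : Run T) (r' : Run T') : Prop :=
  Forall2 (fun p p' => fst p = fst p' /\ Rl (snd p) (snd p')) (proj1_sig r) (proj1_sig r').

Lemma last_st_related (Rl : st T -> st T' -> Prop) l l' q q' :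
  Forall2 (fun p p' => fst p = fst p' /\ Rl (snd p) (snd p')) l l' ->
  Rl q q' -> Rl (last_st T q l) (last_st T' q' l').
Proof.
  intros Hll'; revert q q'.
  induction Hll' as [|[a x] [b y] l l' [_ Hxy] _ IH]; intros q q' Hqq'; simpl; auto.
Qed.

Lemma runs_related_snoc (Rl : st T -> st T' -> Prop) r r' a q q' Hq Hq' :
  runs_related Rl r r' -> Rl q q' ->
  runs_related Rl (run_snoc r a q Hq) (run_snoc r' a q' Hq').
Proof. intros Hrr' Hqq'; apply Forall2_app; auto. Qed.

Lemma approx_bisim_V (Rl : st T -> st T' -> Prop) :
  is_approx_bisim d eps T T' Rl -> is_approx_bisim d eps (V T) (V T') (runs_related Rl).
Proof.
  intros [Hinit [Hforth [Hback Hobs]]].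
  assert (Hunf : forall r r', runs_related Rl r r' -> Rl (unf T r) (unf T' r'))
    by (intros r r' Hrr'; unfold unf; apply last_st_related; assumption).
  split; [constructor|split; [|split]].
  - intros r r' a t Hrr' [q [Hq Ht]].
    destruct (Hforth _ _ _ _ (Hunf _ _ Hrr') Hq) as [q' [Hq' Hqq']].
    exists (run_snoc r' a q' Hq'); split; [apply trans_run_snoc|].
    replace t with (run_snoc r a q Hq) by (apply sig_eq; symmetry; exact Ht).
    apply runs_related_snoc; assumption.
  - intros r r' a t' Hrr' [q' [Hq' Ht']].
    destruct (Hback _ _ _ _ (Hunf _ _ Hrr') Hq') as [q [Hq Hqq']].
    exists (run_snoc r a q Hq); split; [apply trans_run_snoc|].
    replace t' with (run_snoc r' a q' Hq') by (apply sig_eq; symmetry; exact Ht').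
    apply runs_related_snoc; assumption.
  - intros r r' Hrr'; apply Hobs, Hunf, Hrr'.
Qed.

Definition unf_image (RV : Run T -> Run T' -> Prop) (s : st T) (s' : st T') : Prop :=
  exists r r', RV r r' /\ unf T r = s /\ unf T' r' = s'.

Lemma approx_bisim_of_V (RV : Run T -> Run T' -> Prop) :
  is_approx_bisim d eps (V T) (V T') RV -> is_approx_bisim d eps T T' (unf_image RV).
Proof.
  intros [Hinit [Hforth [Hback Hobs]]].
  split; [exists (run_nil T), (run_nil T'); auto|split; [|split]].
  - intros s s' a t [r [r' [Hrr' [<- <-]]]] Ht.
    destruct (Hforth _ _ _ _ Hrr' (trans_run_snoc r a t Ht)) as [r2' [Hr2' Hrel]].
    exists (unf T' r2'); split; [exact (proj2 (unf_tsmor T') _ _ _ Hr2')|].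
    exists (run_snoc r a t Ht), r2'; rewrite unf_run_snoc; auto.
  - intros s s' a t' [r [r' [Hrr' [<- <-]]]] Ht'.
    destruct (Hback _ _ _ _ Hrr' (trans_run_snoc r' a t' Ht')) as [r2 [Hr2 Hrel]].
    exists (unf T r2); split; [exact (proj2 (unf_tsmor T) _ _ _ Hr2)|].
    exists r2, (run_snoc r' a t' Ht'); rewrite unf_run_snoc; auto.
  - intros s s' [r [r' [Hrr' [<- <-]]]]; exact (Hobs _ _ Hrr').
Qed.

End Bisimulations.

Theorem proposition4 (Sig O : Type) (d : O -> O -> R) (Hd : is_pseudometric d) :
  @V_coreflection Sig O d /\
  (forall X : TSO Sig O,
     is_eps_mor d 0 (V X) X (unf X) /\ is_bmor d (V X) X (unf X) /\
     is_Lin_open d (V X) X (unf X)) /\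
  (forall eps : R, 0 <= eps -> forall T T' : TSO Sig O,
     (exists Rl, is_approx_bisim d eps T T' Rl) <->
     (exists Rl, is_approx_bisim d eps (V T) (V T') Rl)).
Proof.
  split; [exact (V_is_coreflection d Hd)|split].
  - intro X; split; [|split].
    + exact (unf_zero_bounded d Hd X).
    + exists 0; split; [lra|exact (unf_zero_bounded d Hd X)].
    + apply unf_Lin_open.
  - intros eps _ T T'; split; intros [Rl HRl].
    + exact (ex_intro _ _ (approx_bisim_V d eps T T' Rl HRl)).
    + exact (ex_intro _ _ (approx_bisim_of_V d eps T T' Rl HRl)).
Qed.
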